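(* Let $U\subset\mathbb{C}\setminus\{0\}$ be a (connected) domain on which an analytic branch of $\ln x$ is fixed, and let $f$ be a nowhere-vanishing complex-differentiable function on $U$. Then $\mathcal{A}[f]=f$ on $U$ if and only if there is a constant $a\in\mathbb{C}$ with $a-\ln x\neq 0$ on $U$ such that \[ f(x)=\frac{1}{a-\ln x}\qquad (x\in U). \]
   Context: For a complex-differentiable, nowhere-vanishing function $f$ on a domain $U\subset\mathbb{C}\setminus\{0\}$, the dual logarithmic derivative operator is $\mathcal{A}[f](x)=\dfrac{\mathrm{d}\ln f(x)}{\mathrm{d}\ln x}=\dfrac{x f'(x)}{f(x)}$ (for fixed analytic branches of the logarithms). A function $f$ with $\mathcal{A}[f]=f$ is called a fixed point of $\mathcal{A}$. *)

(* R[i]^o is R[i] viewed as a normed module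
   over itself, so that [derivable f x 1] is complex differentiability. *)
From mathcomp Require Import all_boot all_order all_algebra.
From mathcomp Require Import complex.
From mathcomp Require Import all_classical all_reals all_analysis.
Import Order.TTheory GRing.Theory Num.Theory.
Import numFieldNormedType.Exports.

Set Implicit Arguments.
Unset Strict Implicit.
Unset Printing Implicit Defensive.

Local Open Scope ring_scope.
Local Open Scope complex_scope.

Definition cexp (R : realType) (z : R[i]) : R[i] :=
  (expR (complex.Re z) * cos (complex.Im z)) +i*
  (expR (complex.Re z) * sin (complex.Im z)).

Definition cdiff (R : realType) (f : R[i]^o -> R[i]^o) (x : R[i]) : Prop :=
  derivable f x 1.

Definition cdomain (R : realType) (U : set R[i]^o) : Prop :=
  open U /\ connected U /\ (U !=set0)%classic.

Definition log_branch (R : realType) (U : set R[i]^o) (L : R[i]^o -> R[i]^o) : Prop :=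
  (forall x, U x -> cdiff L x) /\ (forall x, U x -> cexp (L x) = x).

(* dual logarithmic derivative  A[f](x) = x f'(x) / f(x) *)
Definition dual_logderiv (R : realType) (f : R[i]^o -> R[i]^o) (x : R[i]) : R[i] :=
  x * derive1 f x / f x.

From mathcomp Require Import all_boot all_order all_algebra.
From mathcomp Require Import complex.
From mathcomp Require Import all_classical all_reals all_analysis.
From mathcomp Require Import ring lra.
Import Order.TTheory GRing.Theory Num.Theory.
Import numFieldNormedType.Exports.

Set Implicit Arguments.
Unset Strict Implicit.
Unset Printing Implicit Defensive.

Local Open Scope ring_scope.
Local Open Scope complex_scope.
Local Open Scope classical_set_scope.

(* Differentiating cexp (L x) = x gives x L'(x) = 1, so for g = 1/f the
   equation x f' / f = f reads (g + L)' = 0.  On a connected domain this says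
   exactly that g + L is a constant a, i.e. f = 1 / (a - L).  The analytic
   inputs are cexp' = cexp, obtained from first-order estimates of expR, cos
   and sin at 0, and the vanishing-derivative theorem, obtained from the mean
   value theorem applied to the real and imaginary parts along segments. *)

Section Derive1.
Variable K : numFieldType.
Implicit Types (f g : K^o -> K^o) (x l : K).

Lemma is_derive1_leP f x l : is_derive x 1 f l <->
  forall e : K, 0 < e -> \forall h \near 0, `|f (x + h) - f x - h * l| <= e * `|h|.
Proof.
split=> [[/derivable_nbhsP + <-] e e0|Hf].
  move=> /eqaddoP /(_ e e0); apply: filterS => h /=.
  by rewrite !fctE /= [h%:A]mulr1 (addrC h) opprD addrA.
have fl : (fun h => h^-1 *: ((f \o shift x) (h *: 1) - f x)) @ (0 : K^o)^' --> l.
  apply/cvgrPdist_le => e e0; have /(@nbhs_norm0P _ K^o)[d d0 Hd] := Hf e e0.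
  rewrite near_withinE; apply/(@nbhs_norm0P _ K^o); exists d => // h /= /Hd hd h0.
  rewrite [h%:A]mulr1 (addrC h) -{1}(mulKf h0 l) -mulrBr normrM normfV.
  by rewrite ler_pdivrMl ?normr_gt0 // distrC (mulrC `|h|).
apply: DeriveDef; first exact: cvgP fl.
exact: cvg_lim fl.
Qed.

(* realfun's [is_derive1_comp] only covers real functions. *)
Lemma is_derive1_chain f g x (df dg : K) :
  is_derive x 1 f df -> is_derive (f x) 1 g dg -> is_derive x 1 (g \o f) (dg * df).
Proof.
move=> [/derivable1_diffP f' <-] [/derivable1_diffP g' <-].
have gf' := differentiable_comp f' g'.
apply: DeriveDef; first exact/derivable1_diffP.
rewrite -!derive1E !derive1E' // diff_comp //= -[X in 'd _ _ X = _]mulr1.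
by rewrite [LHS]linearZ mulrC.
Qed.
End Derive1.

Lemma connected_near_eq_cst (T : topologicalType) (Y : Type) (A : set T) (h : T -> Y) :
  connected A -> (forall z, A z -> \forall w \near z, h w = h z) ->
  forall x y, A x -> A y -> h x = h y.
Proof.
move=> cA hloc x y Ax Ay; pose S := [set w | h w = h x].
have AS : A `&` S = A.
  apply: cA; first by exists x.
    exists S°; first exact: open_interior.
    apply/seteqP; split=> w [Aw Sw]; split=> //; last exact: nbhs_singleton.
    by apply: filterS (hloc w Aw) => v; rewrite /S /= => ->.
  exists (closure S); first exact: closed_closure.
  apply/seteqP; split=> w [Aw Sw]; split=> //; first exact: subset_closure.
  by have [v [Sv vw]] := Sw _ (hloc w Aw); rewrite /S /= -vw.
by have [_ <-] : (A `&` S) y by rewrite AS.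
Qed.

Lemma norm_le_sqrtrD_sqr (R : rcfType) (x y : R) : `|x| <= Num.sqrt (x ^+ 2 + y ^+ 2).
Proof. by rewrite -sqrtr_sqr ler_wsqrtr // lerDl sqr_ge0. Qed.

Lemma sqrtrD_sqr_le (R : rcfType) (x y : R) : Num.sqrt (x ^+ 2 + y ^+ 2) <= `|x| + `|y|.
Proof.
rewrite -[leRHS]ger0_norm ?addr_ge0 // -[leRHS]sqrtr_sqr ler_wsqrtr //.
rewrite -[x ^+ 2]real_normK ?num_real // -[y ^+ 2]real_normK ?num_real //.
rewrite sqrrD; have := mulr_ge0 (normr_ge0 x) (normr_ge0 y); lra.
Qed.

Section ComplexPlane.
Variable R : realType.
Implicit Types z : R[i].

Lemma normcR (s : R) : `|s%:C| = `|s|%:C.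
Proof. by rewrite normc_def /= expr0n addr0 sqrtr_sqr. Qed.

Lemma normc_ge_Im z : `|complex.Im z|%:C <= `|z|.
Proof. by case: z => a b; rewrite normc_def lecR addrC norm_le_sqrtrD_sqr. Qed.

Lemma Re_continuous : continuous (fun z : R[i]^o => complex.Re z : R^o).
Proof.
move=> x; apply/(@cvgrPdist_lt _ R^o _ (nbhs x) (nbhs_filter x)) => e e0; near=> y.
rewrite -raddfB -ltcR; apply: le_lt_trans (normc_ge_Re _) _; near: y.
by apply: (@cvgr_dist_lt _ R[i]^o _ (nbhs x) _ id x cvg_id); rewrite ltcR.
Unshelve. all: by end_near. Qed.

Lemma Im_continuous : continuous (fun z : R[i]^o => complex.Im z : R^o).
Proof.
move=> x; apply/(@cvgrPdist_lt _ R^o _ (nbhs x) (nbhs_filter x)) => e e0; near=> y.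
rewrite -raddfB -ltcR; apply: le_lt_trans (normc_ge_Im _) _; near: y.
by apply: (@cvgr_dist_lt _ R[i]^o _ (nbhs x) _ id x cvg_id); rewrite ltcR.
Unshelve. all: by end_near. Qed.

Lemma realC_continuous : continuous (fun s : R^o => s%:C : R[i]^o).
Proof.
move=> s; apply/cvgrPdist_lt; case=> r i; rewrite ltcE /= => /andP[/eqP -> r0].
near=> t; rewrite -rmorphB normcR ltcR; near: t.
exact: (@cvgr_dist_lt _ R^o _ (nbhs s) _ id s cvg_id).
Unshelve. all: by end_near. Qed.

End ComplexPlane.

Section ComplexExponential.
Variable R : realType.
Implicit Types z : R[i].

Lemma cexpD z1 z2 : cexp (z1 + z2) = cexp z1 * cexp z2.
Proof.
case: z1 => a b; case: z2 => c d; rewrite /cexp /= expRD cosD sinD.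
by apply/eqP; rewrite eq_complex /=; apply/andP; split; apply/eqP; ring.
Qed.

Lemma cexp0 : cexp 0 = 1 :> R[i].
Proof. by rewrite /cexp /= expR0 cos0 sin0 mulr1 mulr0. Qed.

Lemma cexp_neq0 z : cexp z != 0.
Proof.
apply/eqP => cz0; have := cexpD z (- z).
by rewrite subrr cexp0 cz0 mul0r; apply/eqP; rewrite oner_eq0.
Qed.

Lemma cexp_sub1_le (s : R) z : s <= 1 -> `|z| <= s%:C ->
  `|expR (complex.Re z) - 1 - complex.Re z| <= s * `|complex.Re z| ->
  `|cos (complex.Im z) - 1| <= s * `|complex.Im z| ->
  `|sin (complex.Im z) - complex.Im z| <= s * `|complex.Im z| ->
  `|cexp z - 1 - z| <= (8 * s)%:C * `|z|.
Proof.
case: z => a b /=; set A := expR a - 1 - a; set C := cos b - 1; set S := sin b - b.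
rewrite !normc_def /= -rmorphM !lecR => s1; set N := Num.sqrt _ => Ns hA hC hS.
have aN : `|a| <= N := norm_le_sqrtrD_sqr a b.
have bN : `|b| <= N by rewrite /N addrC norm_le_sqrtrD_sqr.
have s0 : 0 <= s := le_trans (normr_ge0 a) (le_trans aN Ns).
apply: le_trans (sqrtrD_sqr_le _ _) _.
have -> : expR a * cos b - 1 - a = A * cos b + (1 + a) * C by rewrite /A /C; ring.
have -> : expR a * sin b - 0 - b = S + (a + A) * sin b by rewrite /A /S; ring.
have sinb : `|sin b| <= 2 * `|b|.
  rewrite -[sin b](subrK b) -/S.
  have := normr_ge0 b; have := ler_normD S b; nra.
have aA : `|a + A| <= 2 * `|a|.
  have := normr_ge0 a; have := ler_normD a A; nra.
have re_le : `|A * cos b + (1 + a) * C| <= 3 * s * N.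
  apply: le_trans (ler_normD _ _) _; rewrite !normrM.
  have : `|1 + a| <= 2.
    by apply: le_trans (ler_normD _ _) _; rewrite normr1; nra.
  have := cos_max b.
  have := normr_ge0 A; have := normr_ge0 C; have := normr_ge0 (1 + a); nra.
have im_le : `|S + (a + A) * sin b| <= 5 * s * N.
  apply: le_trans (ler_normD _ _) _; rewrite normrM.
  have := normr_ge0 (a + A); have := normr_ge0 (sin b); have := normr_ge0 b; nra.
lra.
Qed.

Lemma is_derive_cexp0 : is_derive (0 : R[i]^o) 1 (@cexp R : R[i]^o -> R[i]^o) 1.
Proof.
apply/is_derive1_leP; case=> r i; rewrite ltcE /= => /andP[/eqP -> r0].
pose s := Num.min (r / 8) 1.
have s0 : 0 < s by rewrite lt_min ltr01 andbT divr_gt0.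
have taylor1 (f : R^o -> R^o) (d : R) : is_derive (0 : R^o) 1 f d ->
    \forall t \near 0, `|f t - f 0 - t * d| <= s * `|t|.
  by move/is_derive1_leP/(_ s s0); apply: filterS => t; rewrite add0r.
have nearRe (P : R -> Prop) : (\forall t \near (0 : R^o), P t) ->
    \forall h \near (0 : R[i]^o), P (complex.Re h).
  by move=> P0; exact: (@Re_continuous R 0 _ P0).
have nearIm (P : R -> Prop) : (\forall t \near (0 : R^o), P t) ->
    \forall h \near (0 : R[i]^o), P (complex.Im h).
  by move=> P0; exact: (@Im_continuous R 0 _ P0).
near=> h; rewrite add0r cexp0 mulr1.
apply: le_trans (@cexp_sub1_le s h _ _ _ _ _) _.
- by rewrite ge_min lexx orbT.
- near: h; apply/(@nbhs_norm0P _ R[i]^o); exists s%:C; first by rewrite /= ltcE /= eqxx.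
  by move=> z /= /ltW.
- near: h; apply: (nearRe (fun t => `|expR t - 1 - t| <= s * `|t|)).
  apply: filterS (taylor1 _ _ (is_derive_expR 0)) => t.
  by rewrite expR0 mulr1.
- near: h; apply: (nearIm (fun t => `|cos t - 1| <= s * `|t|)).
  apply: filterS (taylor1 _ _ (is_derive_cos 0)) => t.
  by rewrite cos0 sin0 oppr0 mulr0 subr0.
- near: h; apply: (nearIm (fun t => `|sin t - t| <= s * `|t|)).
  apply: filterS (taylor1 _ _ (is_derive_sin 0)) => t.
  by rewrite sin0 cos0 mulr1 subr0.
have s_le : s <= r / 8 by rewrite ge_min lexx.
rewrite ler_wpM2r // lecR; lra.
Unshelve. all: by end_near. Qed.

Lemma is_derive_cexp z :
  is_derive (z : R[i]^o) 1 (@cexp R : R[i]^o -> R[i]^o) (cexp z).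
Proof.
apply/is_derive1_leP => e e0.
have cz0 : 0 < `|cexp z| by rewrite normr_gt0 cexp_neq0.
have := (is_derive1_leP _ _ _).1 is_derive_cexp0 _ (divr_gt0 e0 cz0).
apply: filterS => h; rewrite add0r cexp0 mulr1 cexpD.
have -> : cexp z * cexp h - cexp z - h * cexp z = cexp z * (cexp h - 1 - h).
  by ring.
by move=> ?; rewrite normrM mulrC -(ler_pdivlMr _ _ cz0) mulrAC.
Qed.

Lemma derive_log_branch (L : R[i]^o -> R[i]^o) (x : R[i]^o) : derivable L x 1 ->
  (\forall y \near x, cexp (L y) = y) -> x * 'D_1 L x = 1.
Proof.
move=> dL expL.
have dcL := is_derive1_chain (derivableP dL) (is_derive_cexp (L x)).
rewrite -{1}(nbhs_singleton expL) -(@derive_val _ _ _ _ _ _ _ dcL).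
have /near_eq_derive -> : \near x, ((@cexp R : R[i]^o -> R[i]^o) \o L) x = id x.
  exact: expL.
by rewrite derive_id.
Qed.

End ComplexExponential.

Section VanishingDerivative.
Variable R : realType.

Lemma is_derive0_along_line (h : R[i]^o -> R[i]^o) (p : R[i] -> R) (z c : R[i]) (t : R) :
  {morph p : u v / u - v} -> (forall u, `|p u|%:C <= `|u|) ->
  is_derive (z + t%:C * c : R[i]^o) 1 h 0 ->
  is_derive (t : R^o) 1 (fun s : R^o => p (h (z + s%:C * c))) 0.
Proof.
move=> pB pN dh; apply/is_derive1_leP => e e0.
have c1 : 0 < `|c| + 1 by rewrite ltr_wpDl.
have line0 : (fun s : R^o => s%:C * c : R[i]^o) @ (0 : R^o) --> (0 : R[i]^o).
  apply: cvg_trans (continuous_comp (@realC_continuous R 0) (@mulrr_continuous _ c _)) _.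
  by rewrite /= mul0r.
have eC0 : 0 < e%:C by rewrite ltcE /= eqxx.
have /line0 := (is_derive1_leP _ _ _).1 dh _ (divr_gt0 eC0 c1).
rewrite nbhs_filterE /=; apply: filterS => s /=.
have -> : z + (t + s)%:C * c = z + t%:C * c + s%:C * c by rewrite rmorphD mulrDl addrA.
rewrite !mulr0 !subr0 -pB -lecR => Hs.
apply: le_trans (pN _) (le_trans Hs _).
rewrite normrM normcR !rmorphM mulrACA -[leRHS]mulr1.
rewrite ler_wpM2l ?mulr_ge0 ?ler0c ?(ltW e0) //.
by rewrite mulrC ler_pdivrMr // mul1r lerDl ler01.
Qed.

Lemma near_derive_eq0_cst (h : R[i]^o -> R[i]^o) (z : R[i]^o) :
  (\forall w \near z, is_derive (w : R[i]^o) 1 h 0) -> \forall w \near z, h w = h z.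
Proof.
move=> /(@nbhs_normP _ R[i]^o) [r r0 dh]; apply/(@nbhs_normP _ R[i]^o).
exists r => // y zy; set c := y - z.
have seg (t : R) : 0 <= t <= 1 -> is_derive (z + t%:C * c : R[i]^o) 1 h 0.
  move=> /andP[t0 t1]; apply: dh; rewrite /ball_ /= opprD addrA subrr sub0r.
  rewrite normrN normrM normcR; apply: le_lt_trans zy; rewrite /c distrC.
  by apply: ler_piMl => //; rewrite lecE /= eqxx ger0_norm.
suff eq_p (p : R[i] -> R) : {morph p : u v / u - v} ->
    (forall u, `|p u|%:C <= `|u|) -> p (h y) = p (h z).
  apply/eqP; rewrite eq_complex; apply/andP; split; apply/eqP; apply: eq_p.
  - exact: raddfB.
  - exact: normc_ge_Re.
  - exact: raddfB.
  - exact: normc_ge_Im.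
move=> pB pN; pose phi (s : R^o) := p (h (z + s%:C * c)).
have dphi (t : R) : 0 <= t <= 1 -> is_derive (t : R^o) 1 phi 0.
  by move/seg/(is_derive0_along_line pB pN).
have phi'0 t : t \in `]0, 1[%R -> is_derive (t : R^o) 1 phi 0.
  by rewrite in_itv /= => /andP[t0 t1]; apply: dphi; rewrite !ltW.
have phi_cont : {within `[0, 1], continuous phi}.
  by apply: derivable_within_continuous => t; rewrite in_itv /= => /dphi [].
have [t _] := MVT_segment ler01 phi'0 phi_cont.
rewrite mul0r => /eqP; rewrite subr_eq0 /phi rmorph1 rmorph0 mul1r mul0r addr0.
by rewrite /c addrC subrK => /eqP.
Qed.

End VanishingDerivative.

Lemma dual_logderiv_eq_selfP (R : realType) (f L : R[i]^o -> R[i]^o) (x : R[i]^o) :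
  derivable f x 1 -> derivable L x 1 -> f x != 0 -> x * 'D_1 L x = 1 ->
  dual_logderiv f x = f x <-> 'D_1 ((fun y => (f y)^-1) + L) x = 0.
Proof.
move=> df dL fx0 xL'.
have x0 : x != 0 by apply/eqP => x0; move/eqP: xL'; rewrite x0 mul0r eq_sym oner_eq0.
rewrite /dual_logderiv derive1E (deriveD (derivableV fx0 df) dL) (deriveV fx0 df).
have -> : 'D_1 L x = x^-1 by apply: (mulfI x0); rewrite xL' divff.
set D := 'D_1 f x; set F := f x.
split=> [fixD | D0].
- have -> : D = F ^+ 2 / x.
    by apply: (mulfI x0); rewrite mulrCA divff // mulr1 expr2 -{1}fixD divfK.
  by rewrite scaleNr -[_ *: _]/(_ * _) mulrA mulVf ?expf_neq0 // mul1r addNr.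
- move/eqP: D0; rewrite scaleNr addrC subr_eq0 => /eqP xF.
  have -> : D = F ^+ 2 / x by rewrite xF mulrA divff ?expf_neq0 // mul1r.
  by rewrite mulrCA divff // mulr1 expr2 mulfK.
Qed.

Theorem theorem5p3 (R : realType) (U : set R[i]^o) (L f : R[i]^o -> R[i]^o) :
  cdomain U -> ~ U 0 -> log_branch U L ->
  (forall x, U x -> cdiff f x) -> (forall x, U x -> f x != 0) ->
  ((forall x, U x -> dual_logderiv f x = f x) <->
   exists a : R[i], (forall x, U x -> a - L x != 0) /\
                    (forall x, U x -> f x = (a - L x)^-1)).
Proof.
(* [~ U 0] is redundant: cexp never vanishes and cexp (L x) = x on U. *)
move=> [oU [cU [x0 Ux0]]] _ [dL expL] df fx0; move: oU; rewrite openE => nearU.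
have xL' x : U x -> x * 'D_1 L x = 1.
  by move=> Ux; apply: derive_log_branch (dL x Ux) _; apply: filterS (nearU x Ux).
pose G := (fun y => (f y)^-1) + L.
have dG x : U x -> derivable G x 1.
  by move=> Ux; apply: derivableD (derivableV (fx0 x Ux) (df x Ux)) (dL x Ux).
transitivity (forall x, U x -> 'D_1 G x = 0).
  split=> H x Ux; have := dual_logderiv_eq_selfP (df x Ux) (dL x Ux) (fx0 x Ux) (xL' x Ux).
    by move=> <-; exact: H.
  by move=> ->; exact: H.
transitivity (exists a, forall x, U x -> G x = a).
  split=> [G'0 | [a Ga] x Ux].
  - exists (G x0) => x Ux; move: Ux Ux0; apply: (connected_near_eq_cst cU) => z Uz.
    apply: near_derive_eq0_cst; apply: filterS (nearU z Uz) => w Uw.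
    by rewrite -(G'0 w Uw); exact: derivableP (dG w Uw).
  - rewrite (@near_eq_derive _ _ _ G (cst a)) ?derive_cst //.
    by apply: filterS (nearU x Ux).
split=> [[a Ga] | [a [a0 fa]]]; exists a.
- have aL x : U x -> a - L x = (f x)^-1 by move=> Ux; rewrite -(Ga x Ux) /= addrK.
  by split=> x Ux; rewrite aL // ?invrK ?invr_neq0 ?fx0.
- by move=> x Ux; rewrite /G !fctE fa // invrK subrK.
Qed.
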